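(* Let $\phi$ be a PDL formula in negation normal form, and let $T$ be an expanded tableau whose root is $r=(\{\phi\} :: [\,],\bot,\emptyset,\emptyset :: \mathrm{stat},\mathrm{uev})$, with $\mathrm{stat}$ and $\mathrm{uev}$ determined from the children of $r$ by the rules. If $r$ is not open (i.e. $\mathrm{stat}_r\ne\mathbf{open}$), then $\phi$ is not satisfiable.
   Context: Syntax and semantics of PDL. Fix disjoint countably infinite sets $\mathrm{AFml}$ (atoms $p,q,\dots$) and $\mathrm{APrg}$ (atomic programs $a,b,\dots$). Formulae and programs are defined by mutual induction. Atoms are formulae and atomic programs are programs. If $\varphi,\psi$ are formulae, then $\neg\varphi$, $\varphi\wedge\psi$, $\varphi\vee\psi$ are formulae and $\varphi?$ is a program. If $\varphi$ is a formula and $\alpha$ a program, then $\langle\alpha\rangle\varphi$ and $[\alpha]\varphi$ are formulae. If $\alpha,\beta$ are programs, then $\alpha;\beta$, $\alpha\cup\beta$ and $\alpha^*$ are programs. A model $M=(W,R,V)$ has a nonempty set $W$, relations $R_a\subseteq W\times W$ for $a\in\mathrm{APrg}$, and $V:\mathrm{AFml}\to2^W$. Truth and program relations are defined as follows. - Booleans are standard: $p$ holds at $w$ iff $w\in V(p)$, and $\neg,\wedge,\vee$ are interpreted as usual. - $\langle\alpha\rangle\varphi$ holds at $w$ iff some $v$ with $(w,v)\in[\![\alpha]\!]$ satisfies $\varphi$; $[\alpha]\varphi$ holds at $w$ iff all such $v$ satisfy $\varphi$. - $[\![a]\!]=R_a$; $[\![\alpha\cup\beta]\!]=[\![\alpha]\!]\cup[\![\beta]\!]$;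 $[\![\alpha;\beta]\!]$ is relational composition of $[\![\alpha]\!]$ and $[\![\beta]\!]$; $[\![\alpha^*]\!]$ is the reflexive–transitive closure of $[\![\alpha]\!]$; $[\![\varphi?]\!]=\{(w,w): w\text{ satisfies }\varphi\}$. - $\phi$ is satisfiable iff it holds at some world of some model. A $\langle\rangle$-formula is any $\langle\alpha\rangle\varphi$. It is a non-atomic diamond formula if $\alpha\notin\mathrm{APrg}$. A $\langle{*}\rangle$-formula is any $\langle\alpha^*\rangle\varphi$. NNF: $\neg$ occurs only directly before atoms. $\mathrm{nnf}(\varphi)$ is the equivalent NNF formula obtained by pushing negations inward, and ${\sim}\varphi:=\mathrm{nnf}(\neg\varphi)$. Let $\mathrm{ppre}(\varphi):=\{\langle\alpha_1\rangle\cdots\langle\alpha_k\rangle\varphi:k\ge0\}$. Tableau nodes. A node has the form $(\Gamma :: \mathrm{HCr},\mathrm{Nx},\mathrm{BD},\mathrm{BB} :: \mathrm{stat},\mathrm{uev})$, where: - $\Gamma$ is a finite set of formulae; - $\mathrm{HCr}$ is a finite list of pairs $(\varphi,\Delta)$ with $\varphi\in\Delta$, with length $\mathrm{len}$, $j$-th entry $\mathrm{HCr}[j]$, and concatenation $@$; - $\mathrm{Nx}$ is $\bot$ or a formula; - $\mathrm{BD},\mathrm{BB}$ are sets of formulae; - $\mathrm{stat}\in\{\mathbf{unsat},\mathbf{open},\mathbf{barred}\}$; - $\mathrm{uev}$ is a partial function from pairs ($\langle\rangle$-formula, $\langle{*}\rangle$-formula) to positive integers ($\bot$ = undefined). Auxiliary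 functions: - $\mathrm{uev}_\bot$ is everywhere undefined. - $\mathrm{tst}(\chi)=\chi$ if $\chi$ is a non-atomic diamond formula, else $\bot$. - $\mathrm{bl}(\chi,\Gamma)=\Gamma$ if $\chi$ is a non-atomic diamond formula, else $\emptyset$. - $\min_\bot(f,g)$ is undefined where either argument is undefined, else the pointwise minimum. Rules. The premise set is the displayed principal formula disjointly united with $\Gamma$. Unmentioned histories are copied to children; one-child rules copy the child's $\mathrm{stat}$ to the parent. Terminal rules: - (id): applicable if $\{p,\neg p\}\subseteq\Gamma$; set $\mathrm{stat}:=\mathbf{unsat}$ and $\mathrm{uev}:=\mathrm{uev}_\bot$. - ($\langle*\rangle_2$): premise $\langle\alpha^*\rangle\varphi,\Gamma$ with $\mathrm{Nx}\in\{\bot,\langle\alpha^*\rangle\varphi\}$ and $\langle\alpha^*\rangle\varphi\in\mathrm{BD}$; set $\mathrm{stat}:=\mathbf{barred}$ and $\mathrm{uev}:=\mathrm{uev}_\bot$. Linear rules with $\mathrm{Nx}=\bot$, in each of which $\mathrm{uev}(\chi_1,\chi_2)=\mathrm{uev}_1(\chi_1,\chi_2)$ if $\chi_1\in\Gamma$, else $\bot$: - ($\wedge$): $\varphi\wedge\psi,\Gamma$ has the child $\{\varphi,\psi\}\cup\Gamma$; - ($[\cup]$): $[\alpha\cup\beta]\varphi,\Gamma$ has the child $\{[\alpha]\varphi,[\beta]\varphi\}\cup\Gamma$; - ($[;]$): $[\alpha;\beta]\varphi,\Gamma$ has the child $\{[\alpha][\beta]\varphi\}\cup\Gamma$; - ($[*]$):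 $[\alpha^*]\varphi,\Gamma$ has a child with set $\Gamma$ if $[\alpha^*]\varphi\in\mathrm{BB}$ and $\{\varphi,[\alpha][\alpha^*]\varphi\}\cup\Gamma$ otherwise, and $\mathrm{BB}_1=\{[\alpha^*]\varphi\}\cup\mathrm{BB}$. Further linear rules: - ($\langle;\rangle$): premise $\langle\alpha;\beta\rangle\varphi,\Gamma$ with $\mathrm{Nx}\in\{\bot,\text{principal}\}$. The child is $\{\langle\alpha\rangle\langle\beta\rangle\varphi\}\cup\Gamma$ with $\mathrm{Nx}_1=\mathrm{tst}(\langle\alpha\rangle\langle\beta\rangle\varphi)$ and $\mathrm{BD}_1=\mathrm{bl}(\langle\alpha\rangle\langle\beta\rangle\varphi,\mathrm{BD})$. Set $\mathrm{uev}(\chi_1,\chi_2)$ to be $\mathrm{uev}_1(\langle\alpha\rangle\langle\beta\rangle\varphi,\chi_2)$ if $\chi_1$ is principal; $\mathrm{uev}_1(\chi_1,\chi_2)$ if $\chi_1\in\Gamma$; and $\bot$ otherwise. - ($\langle?\rangle$): premise $\langle\psi?\rangle\varphi,\Gamma$ with $\mathrm{Nx}\in\{\bot,\text{principal}\}$. The child is $\{\psi,\varphi\}\cup\Gamma$ with $\mathrm{Nx}_1=\mathrm{tst}(\varphi)$ and $\mathrm{BD}_1=\mathrm{bl}(\varphi,\mathrm{BD})$. Set $\mathrm{uev}(\chi_1,\chi_2)$ to be $\mathrm{uev}_1(\varphi,\chi_2)$ if $\chi_1$ is principal; $\mathrm{uev}_1(\chi_1,\chi_2)$ if $\chi_1\in\Gamma$;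 and $\bot$ otherwise. Branching rules ($i=1,2$): - ($\vee$): premise $\varphi_1\vee\varphi_2,\Gamma$ with $\mathrm{Nx}=\bot$; children $\{\varphi_i\}\cup\Gamma$. - ($[?]$): premise $[\psi?]\varphi,\Gamma$ with $\mathrm{Nx}=\bot$; children $\{{\sim}\psi\}\cup\Gamma$ and $\{\varphi\}\cup\Gamma$. - For both of these, $\mathrm{uev}'_i(\chi_1,\chi_2)=\mathrm{uev}_i(\chi_1,\chi_2)$ if $\chi_1\in\Gamma$, else $\bot$. - ($\langle\cup\rangle$): premise $\langle\alpha_1\cup\alpha_2\rangle\varphi,\Gamma$ with $\mathrm{Nx}\in\{\bot,\text{principal}\}$. The children are $\{\langle\alpha_i\rangle\varphi\}\cup\Gamma$ with $\mathrm{Nx}_i=\mathrm{tst}(\langle\alpha_i\rangle\varphi)$ and $\mathrm{BD}_i=\mathrm{bl}(\langle\alpha_i\rangle\varphi,\mathrm{BD})$. Set $\mathrm{uev}'_i(\chi_1,\chi_2)$ to be $\mathrm{uev}_i(\langle\alpha_i\rangle\varphi,\chi_2)$ if $\chi_1$ is principal; $\mathrm{uev}_i(\chi_1,\chi_2)$ if $\chi_1\in\Gamma$; and $\bot$ otherwise. - ($\langle*\rangle_1$): premise $\langle\alpha^*\rangle\varphi,\Gamma$ with $\mathrm{Nx}\in\{\bot,\langle\alpha^*\rangle\varphi\}$ and $\langle\alpha^*\rangle\varphi\notin\mathrm{BD}$. - Child 1 is $\{\varphi\}\cup\Gamma$ with $\mathrm{Nx}_1=\mathrm{tst}(\varphi)$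 and $\mathrm{BD}_1=\mathrm{bl}(\varphi,\{\langle\alpha^*\rangle\varphi\}\cup\mathrm{BD})$. - Child 2 is $\{\langle\alpha\rangle\langle\alpha^*\rangle\varphi\}\cup\Gamma$ with $\mathrm{Nx}_2=\mathrm{tst}(\langle\alpha\rangle\langle\alpha^*\rangle\varphi)$ and $\mathrm{BD}_2=\mathrm{bl}(\langle\alpha\rangle\langle\alpha^*\rangle\varphi,\{\langle\alpha^*\rangle\varphi\}\cup\mathrm{BD})$. - $\mathrm{uev}'_1(\chi_1,\chi_2)$ is $\bot$ if $\chi_1=\chi_2=\langle\alpha^*\rangle\varphi$; $\mathrm{uev}_1(\varphi,\chi_2)$ if $\chi_1=\langle\alpha^*\rangle\varphi\ne\chi_2$; $\mathrm{uev}_1(\chi_1,\chi_2)$ if $\chi_1\in\Gamma$; and $\bot$ otherwise. - $\mathrm{uev}'_2(\chi_1,\chi_2)$ is $\mathrm{uev}_2(\langle\alpha\rangle\langle\alpha^*\rangle\varphi,\chi_2)$ if $\chi_1=\langle\alpha^*\rangle\varphi$; $\mathrm{uev}_2(\chi_1,\chi_2)$ if $\chi_1\in\Gamma$; and $\bot$ otherwise. For all branching rules, the parent's variables are computed as follows. - $\mathrm{stat}=\mathbf{unsat}$ if both children are $\mathbf{unsat}$; $\mathbf{open}$ if some child is $\mathbf{open}$; and $\mathbf{barred}$ otherwise. - $\mathrm{uev}=\mathrm{uev}_\bot$ if $\mathrm{stat}\ne\mathbf{open}$. - Otherwise $\mathrm{uev}=\mathrm{uev}'_i$ if only child $i$ is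 open, and $\min_\bot(\mathrm{uev}'_1,\mathrm{uev}'_2)$ if both are open. Existential rule ($\langle\rangle$). The premise set is $\{\langle a_1\rangle\varphi_1,\dots,\langle a_{n+m}\rangle\varphi_{n+m}\}\uplus[-]\Delta\uplus\Gamma$, $n+m\ge0$, subject to the following conditions. - Each $a_i\in\mathrm{APrg}$. - $\Gamma$ consists of atoms and negated atoms only, with no $\{p,\neg p\}\subseteq\Gamma$. - $[-]\Delta$ consists only of formulae $[a]\psi$ with $a\in\mathrm{APrg}$. - Let $\Delta_i=\{\psi:[a_i]\psi\in[-]\Delta\}$. For $i\le n$, $(\varphi_i,\{\varphi_i\}\cup\Delta_i)$ is not an entry of $\mathrm{HCr}$. For $n<k\le n+m$, $(\varphi_k,\{\varphi_k\}\cup\Delta_k)=\mathrm{HCr}[j]$ for some $j$. The children, for $i\le n$, are $\{\varphi_i\}\cup\Delta_i$ with $\mathrm{HCr}_i=\mathrm{HCr}\,@\,[(\varphi_i,\{\varphi_i\}\cup\Delta_i)]$, $\mathrm{Nx}_i=\mathrm{tst}(\varphi_i)$ and $\mathrm{BD}_i=\mathrm{BB}_i=\emptyset$. The parent's variables are computed as follows. - $\mathrm{stat}=\mathbf{unsat}$ if some $i\le n$ has $\mathrm{stat}_i\ne\mathbf{open}$, or there exist $i\le n$ and a $\langle{*}\rangle$-formula $\psi$ with $\varphi_i\in\mathrm{ppre}(\psi)$ and $\mathrm{uev}_i(\varphi_i,\psi)$ defined and $>\mathrm{len}(\mathrm{HCr})$. Otherwise $\mathrm{stat}=\mathbf{open}$.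 - For $n<k\le n+m$, $\mathrm{uev}_k$ is constantly $j$, where $\mathrm{HCr}[j]=(\varphi_k,\{\varphi_k\}\cup\Delta_k)$. - $\mathrm{uev}(\chi_1,\chi_2)=\mathrm{uev}_i(\varphi_i,\chi_2)$ if $\mathrm{stat}=\mathbf{open}$, $\chi_2$ is a $\langle{*}\rangle$-formula, $\chi_1\in\mathrm{ppre}(\chi_2)$ and $\chi_1=\langle a_i\rangle\varphi_i$ for some $i\le n+m$. Otherwise $\mathrm{uev}(\chi_1,\chi_2)=\bot$. Tableau. A tableau is a tree of nodes whose children at each node arise from a single application of one applicable rule (free choice), with each parent's $\mathrm{stat}$ and $\mathrm{uev}$ computed from its children. It is expanded if no rule can be applied to any leaf. *)

From Stdlib Require Import List Arith Relations.
Import ListNotations.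

Inductive form : Type :=
| Atom : nat -> form
| Neg : form -> form
| And : form -> form -> form
| Or : form -> form -> form
| Dia : prog -> form -> form
| Box : prog -> form -> form
with prog : Type :=
| Aprog : nat -> prog
| Test : form -> prog
| Seq : prog -> prog -> prog
| Choice : prog -> prog -> prog
| Star : prog -> prog.

Record model : Type := Model {
  W : Type;
  R : nat -> W -> W -> Prop;
  V : nat -> W -> Prop }.

Fixpoint holds (M : model) (w : W M) (f : form) {struct f} : Prop :=
  match f with
  | Atom p => V M p w
  | Neg g => ~ holds M w g
  | And g h => holds M w g /\ holds M w h
  | Or g h => holds M w g \/ holds M w h
  | Dia a g => exists v, rel M a w v /\ holds M v g
  | Box a g => forall v, rel M a w v -> holds M v g
  end
with rel (M : model) (a : prog) {struct a} : W M -> W M -> Prop :=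
  match a with
  | Aprog n => R M n
  | Test f => fun w v => w = v /\ holds M w f
  | Seq a b => fun w v => exists u, rel M a w u /\ rel M b u v
  | Choice a b => fun w v => rel M a w v \/ rel M b w v
  | Star a => clos_refl_trans (W M) (rel M a)
  end.

(* phi is satisfiable iff it holds at some world of some model
   (the world witnesses nonemptiness of W). *)
Definition satisfiable (f : form) : Prop := exists (M : model) (w : W M), holds M w f.

Fixpoint is_nnf (f : form) : Prop :=
  match f with
  | Atom _ => True
  | Neg g => match g with Atom _ => True | _ => False end
  | And g h | Or g h => is_nnf g /\ is_nnf h
  | Dia a g | Box a g => is_nnfp a /\ is_nnf g
  end
with is_nnfp (a : prog) : Prop :=
  match a with
  | Aprog _ => True
  | Test f => is_nnf f
  | Seq a b | Choice a b => is_nnfp a /\ is_nnfp b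
  | Star a => is_nnfp a
  end.

Fixpoint nnf (f : form) : form :=
  match f with
  | Atom p => Atom p
  | Neg g => nnfneg g
  | And g h => And (nnf g) (nnf h)
  | Or g h => Or (nnf g) (nnf h)
  | Dia a g => Dia (nnfp a) (nnf g)
  | Box a g => Box (nnfp a) (nnf g)
  end
with nnfneg (f : form) : form :=
  match f with
  | Atom p => Neg (Atom p)
  | Neg g => nnf g
  | And g h => Or (nnfneg g) (nnfneg h)
  | Or g h => And (nnfneg g) (nnfneg h)
  | Dia a g => Box (nnfp a) (nnfneg g)
  | Box a g => Dia (nnfp a) (nnfneg g)
  end
with nnfp (a : prog) : prog :=
  match a with
  | Aprog n => Aprog n
  | Test f => Test (nnf f)
  | Seq a b => Seq (nnfp a) (nnfp b)
  | Choice a b => Choice (nnfp a) (nnfp b)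
  | Star a => Star (nnfp a)
  end.

Definition snot (f : form) : form := nnf (Neg f).

Definition is_nad (f : form) : bool :=
  match f with
  | Dia (Aprog _) _ => false
  | Dia _ _ => true
  | _ => false
  end.

Definition is_stardia (f : form) : bool :=
  match f with Dia (Star _) _ => true | _ => false end.

Inductive ppre (psi : form) : form -> Prop :=
| ppre0 : ppre psi psi
| ppreS : forall a f, ppre psi f -> ppre psi (Dia a f).

Definition tst (f : form) : option form := if is_nad f then Some f else None.

Inductive status : Type := Unsat | Open | Barred.

Definition uevT : Type := form -> form -> option nat.
Definition uev_bot : uevT := fun _ _ => None.

Definition minb (x y : option nat) : option nat :=
  match x, y with Some a, Some b => Some (Nat.min a b) | _, _ => None end.

(* Finite sets of formulae are represented by lists, read up to set equality. *)
Record node : Type := mkNode {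
  nG : list form;
  nH : list (form * list form);
  nNx : option form;                (* Nx, None = bot *)
  nBD : list form;
  nBB : list form;
  nStat : status;
  nUev : uevT }.

Definition seteqP (l : list form) (P : form -> Prop) : Prop :=
  forall x, In x l <-> P x.

(* the side set Gamma when pi is the principal formula *)
Definition inG (n : node) (pi : form) (x : form) : Prop := In x (nG n) /\ x <> pi.

Definition blP (chi : form) (B : form -> Prop) (x : form) : Prop :=
  is_nad chi = true /\ B x.

Definition Nx_ok (n : node) (pi : form) : Prop := nNx n = None \/ nNx n = Some pi.

(* HCr[j] = (phi, D) with D equal (as a set) to P; HCr is 1-indexed. *)
Definition hentry (H : list (form * list form)) (j : nat) (phi : form)
  (P : form -> Prop) : Prop :=
  1 <= j /\ exists D, nth_error H (j - 1) = Some (phi, D) /\ seteqP D P.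

Definition uev_std (n : node) (pi : form) (u uc : uevT) : Prop :=
  forall c1 c2, (inG n pi c1 -> u c1 c2 = uc c1 c2) /\
                (~ inG n pi c1 -> u c1 c2 = None).

Definition uev_rep (n : node) (pi rho : form) (u uc : uevT) : Prop :=
  forall c1 c2, (c1 = pi -> u c1 c2 = uc rho c2) /\
                (inG n pi c1 -> u c1 c2 = uc c1 c2) /\
                (c1 <> pi -> ~ inG n pi c1 -> u c1 c2 = None).

Definition lin_std (n k : node) (pi : form) (new bb : form -> Prop) : Prop :=
  In pi (nG n) /\ nNx n = None /\
  seteqP (nG k) (fun x => new x \/ inG n pi x) /\
  nH k = nH n /\ nNx k = nNx n /\
  seteqP (nBD k) (fun x => In x (nBD n)) /\ seteqP (nBB k) bb /\
  nStat n = nStat k /\ uev_std n pi (nUev n) (nUev k).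

Definition rule_and (n : node) (ks : list node) : Prop :=
  exists k f g, ks = [k] /\
    lin_std n k (And f g) (fun x => x = f \/ x = g) (fun x => In x (nBB n)).

Definition rule_boxcup (n : node) (ks : list node) : Prop :=
  exists k a b f, ks = [k] /\
    lin_std n k (Box (Choice a b) f) (fun x => x = Box a f \/ x = Box b f)
      (fun x => In x (nBB n)).

Definition rule_boxseq (n : node) (ks : list node) : Prop :=
  exists k a b f, ks = [k] /\
    lin_std n k (Box (Seq a b) f) (fun x => x = Box a (Box b f))
      (fun x => In x (nBB n)).

Definition rule_boxstar (n : node) (ks : list node) : Prop :=
  exists k a f, ks = [k] /\
    lin_std n k (Box (Star a) f)
      (fun x => ~ In (Box (Star a) f) (nBB n) /\
                (x = f \/ x = Box a (Box (Star a) f)))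
      (fun x => x = Box (Star a) f \/ In x (nBB n)).

Definition lin_dia (n k : node) (pi rho : form) (new : form -> Prop) : Prop :=
  In pi (nG n) /\ Nx_ok n pi /\
  seteqP (nG k) (fun x => new x \/ inG n pi x) /\
  nH k = nH n /\ nNx k = tst rho /\
  seteqP (nBD k) (blP rho (fun x => In x (nBD n))) /\
  seteqP (nBB k) (fun x => In x (nBB n)) /\
  nStat n = nStat k /\ uev_rep n pi rho (nUev n) (nUev k).

Definition rule_diaseq (n : node) (ks : list node) : Prop :=
  exists k a b f, ks = [k] /\
    lin_dia n k (Dia (Seq a b) f) (Dia a (Dia b f)) (fun x => x = Dia a (Dia b f)).

Definition rule_diatest (n : node) (ks : list node) : Prop :=
  exists k psi f, ks = [k] /\
    lin_dia n k (Dia (Test psi) f) f (fun x => x = psi \/ x = f).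

Definition branch_stat (s1 s2 : status) : status :=
  match s1, s2 with
  | Unsat, Unsat => Unsat
  | Open, _ | _, Open => Open
  | _, _ => Barred
  end.

Definition branch_combine (n k1 k2 : node) (u1 u2 : uevT) : Prop :=
  nStat n = branch_stat (nStat k1) (nStat k2) /\
  (nStat n <> Open -> forall c1 c2, nUev n c1 c2 = None) /\
  (nStat k1 = Open -> nStat k2 <> Open -> forall c1 c2, nUev n c1 c2 = u1 c1 c2) /\
  (nStat k2 = Open -> nStat k1 <> Open -> forall c1 c2, nUev n c1 c2 = u2 c1 c2) /\
  (nStat k1 = Open -> nStat k2 = Open ->
     forall c1 c2, nUev n c1 c2 = minb (u1 c1 c2) (u2 c1 c2)).

Definition br_std_child (n k : node) (pi f : form) : Prop :=
  seteqP (nG k) (fun x => x = f \/ inG n pi x) /\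
  nH k = nH n /\ nNx k = nNx n /\
  seteqP (nBD k) (fun x => In x (nBD n)) /\ seteqP (nBB k) (fun x => In x (nBB n)).

Definition rule_or (n : node) (ks : list node) : Prop :=
  exists k1 k2 f1 f2 u1 u2, ks = [k1; k2] /\
    In (Or f1 f2) (nG n) /\ nNx n = None /\
    br_std_child n k1 (Or f1 f2) f1 /\ br_std_child n k2 (Or f1 f2) f2 /\
    uev_std n (Or f1 f2) u1 (nUev k1) /\ uev_std n (Or f1 f2) u2 (nUev k2) /\
    branch_combine n k1 k2 u1 u2.

Definition rule_boxtest (n : node) (ks : list node) : Prop :=
  exists k1 k2 psi f u1 u2, ks = [k1; k2] /\
    In (Box (Test psi) f) (nG n) /\ nNx n = None /\
    br_std_child n k1 (Box (Test psi) f) (snot psi) /\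
    br_std_child n k2 (Box (Test psi) f) f /\
    uev_std n (Box (Test psi) f) u1 (nUev k1) /\
    uev_std n (Box (Test psi) f) u2 (nUev k2) /\
    branch_combine n k1 k2 u1 u2.

Definition br_dia_child (n k : node) (pi rho : form) (B : form -> Prop) : Prop :=
  seteqP (nG k) (fun x => x = rho \/ inG n pi x) /\
  nH k = nH n /\ nNx k = tst rho /\
  seteqP (nBD k) (blP rho B) /\ seteqP (nBB k) (fun x => In x (nBB n)).

Definition rule_diacup (n : node) (ks : list node) : Prop :=
  exists k1 k2 a1 a2 f u1 u2, ks = [k1; k2] /\
    In (Dia (Choice a1 a2) f) (nG n) /\ Nx_ok n (Dia (Choice a1 a2) f) /\
    br_dia_child n k1 (Dia (Choice a1 a2) f) (Dia a1 f) (fun x => In x (nBD n)) /\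
    br_dia_child n k2 (Dia (Choice a1 a2) f) (Dia a2 f) (fun x => In x (nBD n)) /\
    uev_rep n (Dia (Choice a1 a2) f) (Dia a1 f) u1 (nUev k1) /\
    uev_rep n (Dia (Choice a1 a2) f) (Dia a2 f) u2 (nUev k2) /\
    branch_combine n k1 k2 u1 u2.

Definition uev_star1 (n : node) (pi f : form) (u uc : uevT) : Prop :=
  forall c1 c2, (c1 = pi -> c2 = pi -> u c1 c2 = None) /\
                (c1 = pi -> c2 <> pi -> u c1 c2 = uc f c2) /\
                (inG n pi c1 -> u c1 c2 = uc c1 c2) /\
                (c1 <> pi -> ~ inG n pi c1 -> u c1 c2 = None).

Definition rule_diastar1 (n : node) (ks : list node) : Prop :=
  exists k1 k2 a f u1 u2, ks = [k1; k2] /\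
    In (Dia (Star a) f) (nG n) /\ Nx_ok n (Dia (Star a) f) /\
    ~ In (Dia (Star a) f) (nBD n) /\
    br_dia_child n k1 (Dia (Star a) f) f
      (fun x => x = Dia (Star a) f \/ In x (nBD n)) /\
    br_dia_child n k2 (Dia (Star a) f) (Dia a (Dia (Star a) f))
      (fun x => x = Dia (Star a) f \/ In x (nBD n)) /\
    uev_star1 n (Dia (Star a) f) f u1 (nUev k1) /\
    uev_rep n (Dia (Star a) f) (Dia a (Dia (Star a) f)) u2 (nUev k2) /\
    branch_combine n k1 k2 u1 u2.

Definition rule_id (n : node) (ks : list node) : Prop :=
  ks = [] /\ (exists q, In (Atom q) (nG n) /\ In (Neg (Atom q)) (nG n)) /\
  nStat n = Unsat /\ (forall c1 c2, nUev n c1 c2 = None).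

Definition rule_diastar2 (n : node) (ks : list node) : Prop :=
  ks = [] /\
  (exists a f, In (Dia (Star a) f) (nG n) /\ Nx_ok n (Dia (Star a) f) /\
               In (Dia (Star a) f) (nBD n)) /\
  nStat n = Barred /\ (forall c1 c2, nUev n c1 c2 = None).

Definition DeltaP (n : node) (a : nat) (psi : form) : Prop := In (Box (Aprog a) psi) (nG n).

Definition old_dia (n : node) (a : nat) (f : form) : Prop :=
  exists j, hentry (nH n) j f (fun x => x = f \/ DeltaP n a x).

Definition dia_child (n k : node) (a : nat) (f : form) : Prop :=
  seteqP (nG k) (fun x => x = f \/ DeltaP n a x) /\
  nH k = nH n ++ [(f, nG k)] /\ nNx k = tst f /\ nBD k = [] /\ nBB k = [].

Definition uev_cond (n : node) (c1 c2 : form) : Prop :=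
  nStat n = Open /\ is_stardia c2 = true /\ ppre c2 c1.

Definition rule_dia (n : node) (ks : list node) : Prop :=
  (forall x, In x (nG n) ->
     (exists a f, x = Dia (Aprog a) f) \/ (exists a f, x = Box (Aprog a) f) \/
     (exists q, x = Atom q) \/ (exists q, x = Neg (Atom q))) /\
  (forall q, In (Atom q) (nG n) -> ~ In (Neg (Atom q)) (nG n)) /\
  exists ds : list (nat * form),
    NoDup ds /\
    (forall a f, In (a, f) ds <-> (In (Dia (Aprog a) f) (nG n) /\ ~ old_dia n a f)) /\
    length ks = length ds /\
    Forall2 (fun d k => dia_child n k (fst d) (snd d)) ds ks /\
    (nStat n = Unsat <->
       ((exists k, In k ks /\ nStat k <> Open) \/
        (exists d k psi m, In (d, k) (combine ds ks) /\ is_stardia psi = true /\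
           ppre psi (snd d) /\ nUev k (snd d) psi = Some m /\ m > length (nH n)))) /\
    (nStat n <> Unsat -> nStat n = Open) /\
    (forall d k c2, In (d, k) (combine ds ks) ->
       uev_cond n (Dia (Aprog (fst d)) (snd d)) c2 ->
       nUev n (Dia (Aprog (fst d)) (snd d)) c2 = nUev k (snd d) c2) /\
    (forall a f, In (Dia (Aprog a) f) (nG n) -> old_dia n a f ->
       exists j, hentry (nH n) j f (fun x => x = f \/ DeltaP n a x) /\
         forall c2, uev_cond n (Dia (Aprog a) f) c2 ->
           nUev n (Dia (Aprog a) f) c2 = Some j) /\
    (forall c1 c2,
       ~ (uev_cond n c1 c2 /\ exists a f, c1 = Dia (Aprog a) f /\ In c1 (nG n)) ->
       nUev n c1 c2 = None).

Definition rule_step (n : node) (ks : list node) : Prop :=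
  rule_id n ks \/ rule_diastar2 n ks \/
  rule_and n ks \/ rule_boxcup n ks \/ rule_boxseq n ks \/ rule_boxstar n ks \/
  rule_diaseq n ks \/ rule_diatest n ks \/
  rule_or n ks \/ rule_boxtest n ks \/ rule_diacup n ks \/ rule_diastar1 n ks \/
  rule_dia n ks.

Definition same_content (n m : node) : Prop :=
  nG n = nG m /\ nH n = nH m /\ nNx n = nNx m /\ nBD n = nBD m /\ nBB n = nBB m.

Definition applicable (n : node) : Prop :=
  exists m ks, same_content n m /\ rule_step m ks.

(* Leaf = no rule applied (yet); Step = one rule applied, with its children
   (possibly none, for terminal rules and <> with n = 0). *)
Inductive tableau : Type :=
| Leaf : node -> tableau
| Step : node -> list tableau -> tableau.

Definition troot (t : tableau) : node :=
  match t with Leaf n => n | Step n _ => n end.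

Inductive valid_tableau : tableau -> Prop :=
| valid_leaf : forall n, valid_tableau (Leaf n)
| valid_step : forall n ts,
    rule_step n (map troot ts) -> Forall valid_tableau ts ->
    valid_tableau (Step n ts).

Inductive expanded : tableau -> Prop :=
| exp_leaf : forall n, ~ applicable n -> expanded (Leaf n)
| exp_step : forall n ts, Forall expanded ts -> expanded (Step n ts).

From Stdlib Require Import List Arith Lia Relations Wf_nat Classical ClassicalEpsilon.
Import ListNotations.

(* A world w of a model realizes a node when it satisfies the formulae of the node.
   By induction on the tableau, every realized node is open.  Eventualities are ranked
   by the least total cost of a diamond chain fulfilling them, where atomic steps and
   star unfoldings cost one unit and tests are free.  Each diamond rule passes to a
   formula of no greater cost and each <*>-unfolding strictly decreases it; hence the
   focus Nx stays strictly cheaper than every blocked diamond in BD, a realized node is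
   never barred, and a realized leaf always admits a rule.  At the existential rule
   the child is realized at a successor of least cost, so every uev value indexes a
   history entry realized strictly more cheaply than the current eventuality; such an
   entry is already in HCr, and the loop check never fires at a realized node. *)

(** * Costs of fulfilling diamonds *)

(* Every unfolding of a star, the final exit included, costs one unit, so that
   both premisses of the <*>-rule are strictly cheaper than the starred diamond. *)
Inductive rel_cost (M : model) : prog -> W M -> W M -> nat -> Prop :=
| rel_cost_atom : forall a w v, R M a w v -> rel_cost M (Aprog a) w v 1
| rel_cost_test : forall f w, holds M w f -> rel_cost M (Test f) w w 0
| rel_cost_seq : forall a b w u v m n,
    rel_cost M a w u m -> rel_cost M b u v n -> rel_cost M (Seq a b) w v (m + n)
| rel_cost_choice_l : forall a b w v n, rel_cost M a w v n -> rel_cost M (Choice a b) w v n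
| rel_cost_choice_r : forall a b w v n, rel_cost M b w v n -> rel_cost M (Choice a b) w v n
| rel_cost_star0 : forall a w, rel_cost M (Star a) w w 1
| rel_cost_starS : forall a w u v m n,
    rel_cost M a w u m -> rel_cost M (Star a) u v n -> rel_cost M (Star a) w v (S (m + n)).

Definition is_dia (f : form) : bool := match f with Dia _ _ => true | _ => false end.

Inductive dia_cost (M : model) : W M -> form -> nat -> Prop :=
| dia_cost_dia : forall a f w v m n,
    rel_cost M a w v m -> dia_cost M v f n -> dia_cost M w (Dia a f) (m + n)
| dia_cost_other : forall f w, is_dia f = false -> holds M w f -> dia_cost M w f 0.

Lemma rel_cost_rel M a w v n : rel_cost M a w v n -> rel M a w v.
Proof.
  induction 1; simpl; eauto.
  - apply rt_refl.
  - eapply rt_trans; [apply rt_step|]; eauto.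
Qed.

Lemma rel_rel_cost M a : forall w v, rel M a w v -> exists n, rel_cost M a w v n.
Proof.
  induction a as [n|f|a IHa b IHb|a IHa b IHb|a IHa]; simpl; intros w v H.
  - eexists; constructor; exact H.
  - destruct H as [-> H]; eexists; constructor; exact H.
  - destruct H as [u [Hwu Huv]].
    destruct (IHa _ _ Hwu) as [m ?], (IHb _ _ Huv) as [n ?].
    eexists; econstructor; eauto.
  - destruct H as [H|H]; [destruct (IHa _ _ H) | destruct (IHb _ _ H)];
      eexists; [apply rel_cost_choice_l | apply rel_cost_choice_r]; eauto.
  - apply clos_rt_rt1n in H. induction H as [w|w u v Hwu _ [n IH]].
    + eexists; constructor.
    + destruct (IHa _ _ Hwu) as [m ?]. eexists; eapply rel_cost_starS; eauto.
Qed.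

Lemma dia_cost_holds M w f n : dia_cost M w f n -> holds M w f.
Proof.
  induction 1; simpl; auto. exists v; split; auto. eapply rel_cost_rel; eauto.
Qed.

Lemma holds_dia_cost M f : forall w, holds M w f -> exists n, dia_cost M w f n.
Proof.
  induction f as [| | | |a f IH|]; intros w H;
    try (eexists; apply dia_cost_other; [reflexivity|exact H]).
  destruct H as [v [Hwv Hv]].
  destruct (rel_rel_cost _ _ _ _ Hwv) as [m ?], (IH _ Hv) as [n ?].
  eexists; econstructor; eauto.
Qed.

Lemma dia_cost_Dia_inv M w a f n : dia_cost M w (Dia a f) n ->
  exists v m k, rel_cost M a w v m /\ dia_cost M v f k /\ n = m + k.
Proof. inversion 1; subst; [eauto 10 | discriminate]. Qed.

Lemma ex_least_nat (P : nat -> Prop) : (exists n, P n) -> exists m, P m /\ forall k, P k -> m <= k.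
Proof.
  intro HP.
  destruct (dec_inh_nat_subset_has_unique_least_element P (fun n => classic (P n)) HP)
    as [m [[Pm Hm] _]].
  eauto.
Qed.

Lemma holds_least_dia_cost M w f : holds M w f ->
  exists m, dia_cost M w f m /\ forall n, dia_cost M w f n -> m <= n.
Proof. intro H. apply ex_least_nat, holds_dia_cost, H. Qed.

Definition cost_le M w x y :=
  exists m, dia_cost M w x m /\ forall n, dia_cost M w y n -> m <= n.
Definition cost_lt M w x y :=
  exists m, dia_cost M w x m /\ forall n, dia_cost M w y n -> m < n.

Lemma cost_le_lt_trans M w x y z : cost_le M w x y -> cost_lt M w y z -> cost_lt M w x z.
Proof.
  intros [m [Hx Hxy]] [n [Hy Hyz]]. exists m; split; auto.
  intros k Hz. specialize (Hxy _ Hy). specialize (Hyz _ Hz). lia.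
Qed.

Lemma cost_lt_le M w x y : cost_lt M w x y -> cost_le M w x y.
Proof. intros [m [Hx Hxy]]; exists m; split; auto. intros n Hy; specialize (Hxy _ Hy); lia. Qed.

Lemma cost_le_holds M w x y : cost_le M w x y -> holds M w x.
Proof. intros [m [Hx _]]; eapply dia_cost_holds; eauto. Qed.

Lemma cost_lt_holds M w x y : cost_lt M w x y -> holds M w x.
Proof. intros H; apply cost_lt_le, cost_le_holds in H; exact H. Qed.

Lemma dia_seq_cost_le M w a b f : holds M w (Dia (Seq a b) f) ->
  cost_le M w (Dia a (Dia b f)) (Dia (Seq a b) f).
Proof.
  intro H. destruct (holds_least_dia_cost _ _ _ H) as [m [Hm Hleast]].
  destruct (dia_cost_Dia_inv _ _ _ _ _ Hm) as [v [ma [k [Hab [Hk ->]]]]].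
  inversion Hab; subst. exists (m + (n + k)); split.
  - econstructor; eauto. econstructor; eauto.
  - intros n' Hn'. specialize (Hleast _ Hn'). lia.
Qed.

Lemma dia_test_cost_le M w p f : holds M w (Dia (Test p) f) ->
  holds M w p /\ cost_le M w f (Dia (Test p) f).
Proof.
  intro H. destruct (holds_least_dia_cost _ _ _ H) as [m [Hm Hleast]].
  destruct (dia_cost_Dia_inv _ _ _ _ _ Hm) as [v [mp [k [Hp [Hk ->]]]]].
  inversion Hp; subst. split; [assumption|]. exists k; split; [assumption|].
  intros n Hn; specialize (Hleast _ Hn); lia.
Qed.

Lemma dia_choice_cost_le M w a b f : holds M w (Dia (Choice a b) f) ->
  cost_le M w (Dia a f) (Dia (Choice a b) f) \/ cost_le M w (Dia b f) (Dia (Choice a b) f).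
Proof.
  intro H. destruct (holds_least_dia_cost _ _ _ H) as [m [Hm Hleast]].
  destruct (dia_cost_Dia_inv _ _ _ _ _ Hm) as [v [mab [k [Hab [Hk ->]]]]].
  inversion Hab; subst; [left|right]; exists (mab + k);
    (split; [econstructor; eauto | intros n Hn; specialize (Hleast _ Hn); lia]).
Qed.

Lemma dia_star_cost_lt M w a f : holds M w (Dia (Star a) f) ->
  cost_lt M w f (Dia (Star a) f) \/ cost_lt M w (Dia a (Dia (Star a) f)) (Dia (Star a) f).
Proof.
  intro H. destruct (holds_least_dia_cost _ _ _ H) as [m [Hm Hleast]].
  destruct (dia_cost_Dia_inv _ _ _ _ _ Hm) as [v [ms [k [Hs [Hk ->]]]]].
  inversion Hs as [| | | | |a' w' |a' w' u v' m1 m2 Ha Hstar]; subst.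
  - left. exists k; split; [assumption|]. intros n Hn; specialize (Hleast _ Hn); lia.
  - right. exists (m1 + (m2 + k)); split.
    + econstructor; [exact Ha | econstructor; eauto].
    + intros n Hn; specialize (Hleast _ Hn); lia.
Qed.

Lemma dia_atom_least_cost M w a f : holds M w (Dia (Aprog a) f) ->
  exists v k, R M a w v /\ dia_cost M v f k /\
    forall n, dia_cost M w (Dia (Aprog a) f) n -> k < n.
Proof.
  intro H. destruct (holds_least_dia_cost _ _ _ H) as [m [Hm Hleast]].
  destruct (dia_cost_Dia_inv _ _ _ _ _ Hm) as [v [ma [k [Ha [Hk ->]]]]].
  inversion Ha; subst. exists v, k; split; [assumption | split; [assumption|]].
  intros n Hn; specialize (Hleast _ Hn); lia.
Qed.

(** * Negation normal form *)

Scheme form_mut_ind := Induction for form Sort Prop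
  with prog_mut_ind := Induction for prog Sort Prop.
Combined Scheme form_prog_ind from form_mut_ind, prog_mut_ind.

Lemma clos_refl_trans_mono {A} (R1 R2 : relation A) : inclusion A R1 R2 ->
  inclusion A (clos_refl_trans A R1) (clos_refl_trans A R2).
Proof. intros H x y Hxy; induction Hxy; eauto using rt_step, rt_refl, rt_trans. Qed.

Lemma holds_nnf M :
  (forall f w, (holds M w (nnf f) <-> holds M w f) /\
               (holds M w (nnfneg f) <-> ~ holds M w f)) /\
  (forall a w v, rel M (nnfp a) w v <-> rel M a w v).
Proof.
  apply form_prog_ind; intros; simpl.
  - tauto.
  - destruct (H w) as [H1 H2]. split; [tauto|]. split; [tauto|]. intro; apply H1, NNPP; auto.
  - destruct (H w), (H0 w). split; [tauto|]. split; [tauto|].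
    intro Hn. destruct (classic (holds M w f)); [right|left]; tauto.
  - destruct (H w), (H0 w). tauto.
  - split.
    + split; intros [v [Hr Hv]]; exists v; split; try apply H; try apply H0; auto.
    + split.
      * intros Hb [v [Hr Hv]]. destruct (H0 v) as [_ [H1 _]].
        apply (H1 (Hb v (proj2 (H w v) Hr))). exact Hv.
      * intros Hn v Hr. destruct (H0 v) as [_ [_ H2]]. apply H2. intro Hv. apply Hn.
        exists v; split; [apply H|]; auto.
  - split.
    + split; intros Hb v Hr; apply H0, Hb, H; auto.
    + split.
      * intros [v [Hr Hv]] Hb. destruct (H0 v) as [_ [H1 _]].
        apply (H1 Hv), Hb, H; auto.
      * intro Hn. apply NNPP; intro Hn2. apply Hn. intros v Hr. apply NNPP; intro Hv.
        apply Hn2. exists v; split; [apply H|apply H0]; auto.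
  - tauto.
  - destruct (H w) as [H1 _]. tauto.
  - split; intros [u [Hu1 Hu2]]; exists u; split; try apply H; try apply H0; auto.
  - split; (intros [Hx|Hx]; [left; apply H | right; apply H0]; auto).
  - split; apply clos_refl_trans_mono; intros x y; apply H.
Qed.

Lemma nnf_is_nnf :
  (forall f, is_nnf (nnf f) /\ is_nnf (nnfneg f)) /\ (forall a, is_nnfp (nnfp a)).
Proof. apply form_prog_ind; simpl; tauto. Qed.

Lemma holds_snot M w p : holds M w (snot p) <-> ~ holds M w p.
Proof. apply (proj1 (holds_nnf M) p w). Qed.

Lemma snot_is_nnf p : is_nnf (snot p).
Proof. apply (proj1 nnf_is_nnf p). Qed.

(** * Realized nodes *)

(* Blocked diamonds stay strictly costlier than the focus [Nx]; this is what makes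
   the barred rule unreachable at a realized node. *)
Record realizes (M : model) (w : W M) (n : node) : Prop := {
  realizes_nnf : forall x, In x (nG n) -> is_nnf x;
  realizes_holds : forall x, In x (nG n) -> holds M w x;
  realizes_Nx : forall x, nNx n = Some x -> In x (nG n) /\ is_nad x = true;
  realizes_BD_nil : nNx n = None -> forall y, ~ In y (nBD n);
  realizes_BD_lt : forall x, nNx n = Some x -> forall b, In b (nBD n) -> cost_lt M w x b }.

Arguments realizes_nnf {M w n}.
Arguments realizes_holds {M w n}.
Arguments realizes_Nx {M w n}.
Arguments realizes_BD_nil {M w n}.
Arguments realizes_BD_lt {M w n}.

Definition cheaper_witness M (D : list form) (phi : form) (w : W M) (c : form) : Prop :=
  exists u m, (forall x, In x D -> holds M u x) /\ dia_cost M u phi m /\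
    forall n, dia_cost M w c n -> m < n.

Definition uev_bounded M (H : list (form * list form)) (w : W M) (c : form)
  (o : option nat) : Prop :=
  o = None \/ exists v j phi D, o = Some v /\ v <= j /\ 1 <= j /\
    nth_error H (j - 1) = Some (phi, D) /\ cheaper_witness M D phi w c.

Definition uev_invariant_for M (n : node) (w : W M) (u : uevT) : Prop :=
  forall c psi, In c (nG n) -> is_stardia psi = true -> ppre psi c ->
    uev_bounded M (nH n) w c (u c psi).

Definition uev_invariant M (n : node) (w : W M) : Prop := uev_invariant_for M n w (nUev n).

Definition sound M (n : node) : Prop :=
  forall w, realizes M w n -> nStat n = Open /\ uev_invariant M n w.

Lemma uev_bounded_cost_le M H w rho c o :
  uev_bounded M H w rho o -> cost_le M w rho c -> uev_bounded M H w c o.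
Proof.
  intros [->|(v & j & phi & D & -> & Hvj & Hj & HH & (u & m & Hu & Hm & Hlt))] [k [Hk Hle]];
    [left; reflexivity|].
  right; exists v, j, phi, D; repeat split; auto.
  exists u, m; repeat split; auto.
  intros n Hn. specialize (Hle _ Hn). specialize (Hlt _ Hk). lia.
Qed.

Lemma uev_bounded_minb_l M H w c o1 o2 :
  uev_bounded M H w c o1 -> uev_bounded M H w c (minb o1 o2).
Proof.
  intros [->|(v & j & phi & D & -> & Hvj & Hj & HH & Hw)]; [left; reflexivity|].
  destruct o2 as [v'|]; simpl; [|left; reflexivity].
  right; exists (Nat.min v v'), j, phi, D; repeat split; auto. lia.
Qed.

Lemma uev_bounded_minb_r M H w c o1 o2 :
  uev_bounded M H w c o2 -> uev_bounded M H w c (minb o1 o2).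
Proof.
  intros [->|(v & j & phi & D & -> & Hvj & Hj & HH & Hw)].
  - destruct o1; left; reflexivity.
  - destruct o1 as [v'|]; simpl; [|left; reflexivity].
    right; exists (Nat.min v' v), j, phi, D; repeat split; auto. lia.
Qed.

Lemma ppre_stardia_is_dia psi c : is_stardia psi = true -> ppre psi c -> is_dia c = true.
Proof. intros Hs Hp; induction Hp; auto. destruct psi; try discriminate; reflexivity. Qed.

Lemma ppre_Dia_inv psi a f : ppre psi (Dia a f) -> Dia a f <> psi -> ppre psi f.
Proof. intros H Hne; inversion H; subst; [congruence|assumption]. Qed.

Lemma branch_combine_open_l M w n k1 k2 u1 u2 : branch_combine n k1 k2 u1 u2 ->
  nStat k1 = Open -> uev_invariant_for M n w u1 -> nStat n = Open /\ uev_invariant M n w.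
Proof.
  intros (Hs & _ & H1 & _ & H12) Ho Hinv.
  split; [rewrite Hs, Ho; destruct (nStat k2); reflexivity|].
  intros c psi Hc Hps Hp. specialize (Hinv c psi Hc Hps Hp).
  destruct (nStat k2) eqn:E2.
  - rewrite H1; auto; congruence.
  - rewrite H12; auto. apply uev_bounded_minb_l, Hinv.
  - rewrite H1; auto; congruence.
Qed.

Lemma branch_combine_open_r M w n k1 k2 u1 u2 : branch_combine n k1 k2 u1 u2 ->
  nStat k2 = Open -> uev_invariant_for M n w u2 -> nStat n = Open /\ uev_invariant M n w.
Proof.
  intros (Hs & _ & _ & H2 & H12) Ho Hinv.
  split; [rewrite Hs, Ho; destruct (nStat k1); reflexivity|].
  intros c psi Hc Hps Hp. specialize (Hinv c psi Hc Hps Hp).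
  destruct (nStat k1) eqn:E1.
  - rewrite H2; auto; congruence.
  - rewrite H12; auto. apply uev_bounded_minb_r, Hinv.
  - rewrite H2; auto; congruence.
Qed.

Lemma tst_Some rho x : tst rho = Some x -> x = rho /\ is_nad rho = true.
Proof. unfold tst; destruct (is_nad rho); intro H; inversion H; auto. Qed.

Lemma realizes_unfocused M w k :
  (forall x, In x (nG k) -> is_nnf x /\ holds M w x) ->
  nNx k = None -> (forall y, ~ In y (nBD k)) -> realizes M w k.
Proof.
  intros HG HN HB. split; try (intros x Hx; apply HG, Hx); auto; intros x Hx; congruence.
Qed.

Lemma realizes_focused M w k rho (B : form -> Prop) :
  (forall x, In x (nG k) -> is_nnf x /\ holds M w x) -> In rho (nG k) -> nNx k = tst rho ->
  seteqP (nBD k) (blP rho B) -> (forall b, B b -> cost_lt M w rho b) -> realizes M w k.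
Proof.
  intros HG Hrho HN HB Hlt. split.
  - intros x Hx; apply HG, Hx.
  - intros x Hx; apply HG, Hx.
  - intros x Hx. rewrite HN in Hx. apply tst_Some in Hx as [-> Hnad]. auto.
  - intros HNone y Hy. apply HB in Hy as [Hnad _].
    rewrite HN in HNone. unfold tst in HNone. rewrite Hnad in HNone. discriminate.
  - intros x Hx b Hb. rewrite HN in Hx. apply tst_Some in Hx as [-> _].
    apply HB in Hb as [_ Hb]. auto.
Qed.

Lemma BD_cost_lt M w n pi rho : realizes M w n -> Nx_ok n pi -> cost_le M w rho pi ->
  forall b, In b (nBD n) -> cost_lt M w rho b.
Proof.
  intros Hn [HN|HN] Hle b Hb.
  - exfalso; exact (realizes_BD_nil Hn HN b Hb).
  - eapply cost_le_lt_trans; [exact Hle | exact (realizes_BD_lt Hn _ HN _ Hb)].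
Qed.

Lemma BD_star_cost_lt M w n pi rho : realizes M w n -> Nx_ok n pi -> cost_lt M w rho pi ->
  forall b, b = pi \/ In b (nBD n) -> cost_lt M w rho b.
Proof.
  intros Hn Hok Hlt b [->|Hb]; auto. eapply BD_cost_lt; eauto. apply cost_lt_le, Hlt.
Qed.

Lemma realizes_side M w n pi x : realizes M w n -> inG n pi x -> is_nnf x /\ holds M w x.
Proof. intros Hn [Hx _]. exact (conj (realizes_nnf Hn x Hx) (realizes_holds Hn x Hx)). Qed.

Lemma uev_invariant_of_child M w n k pi rho (u : uevT) :
  realizes M w k -> sound M k -> nH k = nH n ->
  (forall x, inG n pi x -> In x (nG k)) ->
  (forall c1 c2, inG n pi c1 -> u c1 c2 = nUev k c1 c2) ->
  (forall psi, is_stardia psi = true -> ppre psi pi ->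
     u pi psi = None \/
     (u pi psi = nUev k rho psi /\ ppre psi rho /\ In rho (nG k) /\ cost_le M w rho pi)) ->
  nStat k = Open /\ uev_invariant_for M n w u.
Proof.
  intros Hk Hsound HH Hside Hu Hpi. destruct (Hsound w Hk) as [Hopen Hinv].
  split; [exact Hopen|]. intros c psi Hc Hs Hp. rewrite <- HH.
  destruct (classic (c = pi)) as [->|Hne].
  - destruct (Hpi psi Hs Hp) as [->|(-> & Hpr & Hr & Hle)]; [left; reflexivity|].
    eapply uev_bounded_cost_le; [apply Hinv|]; eauto.
  - assert (Hg : inG n pi c) by (split; auto).
    rewrite (Hu _ _ Hg). apply Hinv; auto.
Qed.

Lemma sound_lin_std M n k pi new bb : lin_std n k pi new bb -> is_dia pi = false ->
  (forall w, realizes M w n -> forall x, new x -> is_nnf x /\ holds M w x) ->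
  sound M k -> sound M n.
Proof.
  intros (_ & HN & HG & HH & HNk & HB & _ & Hst & Hu) Hpi Hnew Hk w Hn.
  assert (Rk : realizes M w k).
  { apply realizes_unfocused; [|congruence|].
    - intros x Hx. apply HG in Hx as [Hx|Hx]; [exact (Hnew w Hn x Hx)|].
      exact (realizes_side _ _ _ _ _ Hn Hx).
    - intros y Hy. apply HB in Hy. exact (realizes_BD_nil Hn HN y Hy). }
  destruct (uev_invariant_of_child M w n k pi pi (nUev n) Rk Hk HH) as [Ho Hinv].
  - intros x Hx; apply HG; right; exact Hx.
  - intros c1 c2 Hc; apply (Hu c1 c2), Hc.
  - intros psi Hs Hp. apply ppre_stardia_is_dia in Hp; congruence.
  - split; [congruence | exact Hinv].
Qed.

Lemma sound_lin_dia M n k pi rho new : lin_dia n k pi rho new -> new rho ->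
  (forall w, realizes M w n ->
     (forall x, new x -> is_nnf x /\ holds M w x) /\ cost_le M w rho pi) ->
  (forall psi, is_stardia psi = true -> ppre psi pi -> ppre psi rho) ->
  sound M k -> sound M n.
Proof.
  intros (_ & Hok & HG & HH & HNk & HB & _ & Hst & Hu) Hrho Hnew Hpp Hk w Hn.
  destruct (Hnew w Hn) as [Hnew' Hle].
  assert (Rk : realizes M w k).
  { apply (realizes_focused M w k rho (fun x => In x (nBD n))); auto.
    - intros x Hx. apply HG in Hx as [Hx|Hx]; [exact (Hnew' x Hx)|].
      exact (realizes_side _ _ _ _ _ Hn Hx).
    - apply HG; left; exact Hrho.
    - eapply BD_cost_lt; eauto. }
  destruct (uev_invariant_of_child M w n k pi rho (nUev n) Rk Hk HH) as [Ho Hinv].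
  - intros x Hx; apply HG; right; exact Hx.
  - intros c1 c2 Hc; apply (Hu c1 c2), Hc.
  - intros psi Hs Hp. right. repeat split; auto.
    + apply (Hu pi psi); reflexivity.
    + apply HG; left; exact Hrho.
  - split; [congruence | exact Hinv].
Qed.

Lemma std_child_open M w n k pi f u : realizes M w n -> nNx n = None -> is_dia pi = false ->
  br_std_child n k pi f -> uev_std n pi u (nUev k) -> is_nnf f -> holds M w f -> sound M k ->
  nStat k = Open /\ uev_invariant_for M n w u.
Proof.
  intros Hn HN Hpi (HG & HH & HNk & HB & _) Hu Hf1 Hf2 Hk.
  assert (Rk : realizes M w k).
  { apply realizes_unfocused; [|congruence|].
    - intros x Hx. apply HG in Hx as [->|Hx]; [auto|].
      exact (realizes_side _ _ _ _ _ Hn Hx).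
    - intros y Hy. apply HB in Hy. exact (realizes_BD_nil Hn HN y Hy). }
  apply (uev_invariant_of_child M w n k pi pi u Rk Hk HH).
  - intros x Hx; apply HG; right; exact Hx.
  - intros c1 c2 Hc; apply (Hu c1 c2), Hc.
  - intros psi Hs Hp. apply ppre_stardia_is_dia in Hp; congruence.
Qed.

Lemma dia_child_open M w n k pi rho B u : realizes M w n -> br_dia_child n k pi rho B ->
  is_nnf rho -> holds M w rho -> (forall b, B b -> cost_lt M w rho b) ->
  (forall c1 c2, inG n pi c1 -> u c1 c2 = nUev k c1 c2) ->
  (forall psi, is_stardia psi = true -> ppre psi pi ->
     u pi psi = None \/ (u pi psi = nUev k rho psi /\ ppre psi rho /\ cost_le M w rho pi)) ->
  sound M k ->
  nStat k = Open /\ uev_invariant_for M n w u.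
Proof.
  intros Hn (HG & HH & HNk & HB & _) Hr1 Hr2 Hlt Hu Hpi Hk.
  assert (Rk : realizes M w k).
  { apply (realizes_focused M w k rho B); auto.
    - intros x Hx. apply HG in Hx as [->|Hx]; [auto|].
      exact (realizes_side _ _ _ _ _ Hn Hx).
    - apply HG; left; reflexivity. }
  apply (uev_invariant_of_child M w n k pi rho u Rk Hk HH); auto.
  - intros x Hx; apply HG; right; exact Hx.
  - intros psi Hs Hp. destruct (Hpi psi Hs Hp) as [E|(E & Hpr & Hle)]; [left; exact E|right].
    repeat split; auto. apply HG; left; reflexivity.
Qed.

(** * Soundness of the rules *)

Lemma Forall2_In_combine {A B} (P : A -> B -> Prop) l1 l2 x y :
  Forall2 P l1 l2 -> In (x, y) (combine l1 l2) -> P x y.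
Proof.
  induction 1; simpl; [tauto|]. intros [E|E]; [injection E as -> ->; assumption | auto].
Qed.

Lemma Forall2_In_l_combine {A B} (P : A -> B -> Prop) l1 l2 x :
  Forall2 P l1 l2 -> In x l1 -> exists y, In (x, y) (combine l1 l2).
Proof.
  induction 1; simpl; [tauto|]. intros [->|E]; [eauto|].
  destruct (IHForall2 E) as [z Hz]; eauto.
Qed.

Lemma Forall2_In_r_combine {A B} (P : A -> B -> Prop) l1 l2 y :
  Forall2 P l1 l2 -> In y l2 -> exists x, In (x, y) (combine l1 l2).
Proof.
  induction 1; simpl; [tauto|]. intros [->|E]; [eauto|].
  destruct (IHForall2 E) as [z Hz]; eauto.
Qed.

Section RuleSoundness.

Variable M : model.

Definition children_sound (ks : list node) : Prop := forall k, In k ks -> sound M k.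

Lemma rule_and_sound n ks : rule_and n ks -> children_sound ks -> sound M n.
Proof.
  intros (k & f & g & -> & Hl) Hks.
  apply (sound_lin_std M n k _ _ _ Hl); auto; [|apply Hks; now left].
  intros w Hn x Hx. destruct Hl as [Hin _].
  pose proof (realizes_nnf Hn _ Hin). pose proof (realizes_holds Hn _ Hin).
  destruct Hx as [-> | ->]; simpl in *; tauto.
Qed.

Lemma rule_boxcup_sound n ks : rule_boxcup n ks -> children_sound ks -> sound M n.
Proof.
  intros (k & a & b & f & -> & Hl) Hks.
  apply (sound_lin_std M n k _ _ _ Hl); auto; [|apply Hks; now left].
  intros w Hn x Hx. destruct Hl as [Hin _].
  pose proof (realizes_nnf Hn _ Hin) as Hnnf. pose proof (realizes_holds Hn _ Hin) as Hh.
  destruct Hx as [-> | ->]; simpl in *; (split; [tauto|]); intros v Hv; auto.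
Qed.

Lemma rule_boxseq_sound n ks : rule_boxseq n ks -> children_sound ks -> sound M n.
Proof.
  intros (k & a & b & f & -> & Hl) Hks.
  apply (sound_lin_std M n k _ _ _ Hl); auto; [|apply Hks; now left].
  intros w Hn x ->. destruct Hl as [Hin _].
  pose proof (realizes_nnf Hn _ Hin) as Hnnf. pose proof (realizes_holds Hn _ Hin) as Hh.
  simpl in *. split; [tauto|]. intros u Hu v Hv. eauto.
Qed.

Lemma rule_boxstar_sound n ks : rule_boxstar n ks -> children_sound ks -> sound M n.
Proof.
  intros (k & a & f & -> & Hl) Hks.
  apply (sound_lin_std M n k _ _ _ Hl); auto; [|apply Hks; now left].
  intros w Hn x [_ Hx]. destruct Hl as [Hin _].
  pose proof (realizes_nnf Hn _ Hin) as Hnnf. pose proof (realizes_holds Hn _ Hin) as Hh.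
  destruct Hx as [-> | ->]; simpl in *; (split; [tauto|]).
  - apply Hh, rt_refl.
  - intros u Hu v Hv. apply Hh. eapply rt_trans; [apply rt_step|]; eauto.
Qed.

Lemma rule_diaseq_sound n ks : rule_diaseq n ks -> children_sound ks -> sound M n.
Proof.
  intros (k & a & b & f & -> & Hl) Hks.
  apply (sound_lin_dia M n k _ _ _ Hl eq_refl); [| |apply Hks; now left].
  - intros w Hn. destruct Hl as [Hin _].
    pose proof (realizes_nnf Hn _ Hin) as Hnnf.
    pose proof (dia_seq_cost_le _ _ _ _ _ (realizes_holds Hn _ Hin)) as Hle.
    split; [|exact Hle]. intros x ->. split; [simpl in *; tauto | eapply cost_le_holds, Hle].
  - intros psi Hs Hp. apply ppre_Dia_inv in Hp; [|intros <-; discriminate].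
    repeat constructor; exact Hp.
Qed.

Lemma rule_diatest_sound n ks : rule_diatest n ks -> children_sound ks -> sound M n.
Proof.
  intros (k & p & f & -> & Hl) Hks.
  apply (sound_lin_dia M n k _ _ _ Hl (or_intror eq_refl)); [| |apply Hks; now left].
  - intros w Hn. destruct Hl as [Hin _].
    pose proof (realizes_nnf Hn _ Hin) as Hnnf.
    destruct (dia_test_cost_le _ _ _ _ (realizes_holds Hn _ Hin)) as [Hp Hle].
    split; [|exact Hle].
    intros x [-> | ->]; (split; [simpl in *; tauto|]); [exact Hp | eapply cost_le_holds, Hle].
  - intros psi Hs Hp. apply ppre_Dia_inv in Hp; [exact Hp | intros <-; discriminate].
Qed.

Lemma rule_or_sound n ks : rule_or n ks -> children_sound ks -> sound M n.
Proof.
  intros (k1 & k2 & f1 & f2 & u1 & u2 & -> & Hin & HN & Hb1 & Hb2 & Hu1 & Hu2 & Hbc) Hks w Hn.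
  pose proof (realizes_nnf Hn _ Hin) as Hnnf. pose proof (realizes_holds Hn _ Hin) as Hh.
  simpl in Hnnf, Hh. destruct Hh as [Hh|Hh].
  - destruct (std_child_open M w n k1 (Or f1 f2) f1 u1 Hn HN eq_refl Hb1 Hu1) as [Ho Hinv];
      try tauto; [apply Hks; simpl; auto|].
    exact (branch_combine_open_l _ _ _ _ _ _ _ Hbc Ho Hinv).
  - destruct (std_child_open M w n k2 (Or f1 f2) f2 u2 Hn HN eq_refl Hb2 Hu2) as [Ho Hinv];
      try tauto; [apply Hks; simpl; auto|].
    exact (branch_combine_open_r _ _ _ _ _ _ _ Hbc Ho Hinv).
Qed.

Lemma rule_boxtest_sound n ks : rule_boxtest n ks -> children_sound ks -> sound M n.
Proof.
  intros (k1 & k2 & p & f & u1 & u2 & -> & Hin & HN & Hb1 & Hb2 & Hu1 & Hu2 & Hbc) Hks w Hn.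
  pose proof (realizes_nnf Hn _ Hin) as Hnnf. pose proof (realizes_holds Hn _ Hin) as Hh.
  simpl in Hnnf, Hh. destruct (classic (holds M w p)) as [Hp|Hp].
  - destruct (std_child_open M w n k2 (Box (Test p) f) f u2 Hn HN eq_refl Hb2 Hu2) as [Ho Hinv];
      [tauto | apply Hh; split; auto | apply Hks; simpl; auto |].
    exact (branch_combine_open_r _ _ _ _ _ _ _ Hbc Ho Hinv).
  - destruct (std_child_open M w n k1 (Box (Test p) f) (snot p) u1 Hn HN eq_refl Hb1 Hu1)
      as [Ho Hinv];
      [apply snot_is_nnf | apply holds_snot, Hp | apply Hks; simpl; auto |].
    exact (branch_combine_open_l _ _ _ _ _ _ _ Hbc Ho Hinv).
Qed.

Lemma rule_diacup_sound n ks : rule_diacup n ks -> children_sound ks -> sound M n.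
Proof.
  intros (k1 & k2 & a1 & a2 & f & u1 & u2 & -> & Hin & Hok & Hb1 & Hb2 & Hu1 & Hu2 & Hbc) Hks w Hn.
  pose proof (realizes_nnf Hn _ Hin) as Hnnf. pose proof (realizes_holds Hn _ Hin) as Hh.
  destruct (dia_choice_cost_le _ _ _ _ _ Hh) as [Hle|Hle].
  - destruct (dia_child_open M w n k1 _ (Dia a1 f) _ u1 Hn Hb1) as [Ho Hinv].
    + simpl in *; tauto.
    + eapply cost_le_holds, Hle.
    + eapply BD_cost_lt; eauto.
    + intros c1 c2 Hc; apply (Hu1 c1 c2), Hc.
    + intros psi Hs Hp. right. repeat split; auto.
      * apply (Hu1 _ psi); reflexivity.
      * apply ppre_Dia_inv in Hp; [constructor; exact Hp | intros <-; discriminate].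
    + apply Hks; simpl; auto.
    + exact (branch_combine_open_l _ _ _ _ _ _ _ Hbc Ho Hinv).
  - destruct (dia_child_open M w n k2 _ (Dia a2 f) _ u2 Hn Hb2) as [Ho Hinv].
    + simpl in *; tauto.
    + eapply cost_le_holds, Hle.
    + eapply BD_cost_lt; eauto.
    + intros c1 c2 Hc; apply (Hu2 c1 c2), Hc.
    + intros psi Hs Hp. right. repeat split; auto.
      * apply (Hu2 _ psi); reflexivity.
      * apply ppre_Dia_inv in Hp; [constructor; exact Hp | intros <-; discriminate].
    + apply Hks; simpl; auto.
    + exact (branch_combine_open_r _ _ _ _ _ _ _ Hbc Ho Hinv).
Qed.

Lemma rule_diastar1_sound n ks : rule_diastar1 n ks -> children_sound ks -> sound M n.
Proof.
  intros (k1 & k2 & a & f & u1 & u2 & -> & Hin & Hok & _ & Hb1 & Hb2 & Hu1 & Hu2 & Hbc) Hks w Hn.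
  pose proof (realizes_nnf Hn _ Hin) as Hnnf. pose proof (realizes_holds Hn _ Hin) as Hh.
  destruct (dia_star_cost_lt _ _ _ _ Hh) as [Hlt|Hlt].
  - destruct (dia_child_open M w n k1 _ f _ u1 Hn Hb1) as [Ho Hinv].
    + simpl in *; tauto.
    + eapply cost_lt_holds, Hlt.
    + eapply BD_star_cost_lt; eauto.
    + intros c1 c2 Hc; apply (Hu1 c1 c2), Hc.
    + intros psi Hs Hp. destruct (classic (psi = Dia (Star a) f)) as [->|Hne].
      * left. apply (proj1 (Hu1 (Dia (Star a) f) (Dia (Star a) f))); reflexivity.
      * right. repeat split.
        -- apply (proj1 (proj2 (Hu1 (Dia (Star a) f) psi))); auto.
        -- apply ppre_Dia_inv in Hp; auto.
        -- apply cost_lt_le, Hlt.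
    + apply Hks; simpl; auto.
    + exact (branch_combine_open_l _ _ _ _ _ _ _ Hbc Ho Hinv).
  - destruct (dia_child_open M w n k2 _ (Dia a (Dia (Star a) f)) _ u2 Hn Hb2) as [Ho Hinv].
    + simpl in *; tauto.
    + eapply cost_lt_holds, Hlt.
    + eapply BD_star_cost_lt; eauto.
    + intros c1 c2 Hc; apply (Hu2 c1 c2), Hc.
    + intros psi Hs Hp. right. repeat split.
      * apply (Hu2 _ psi); reflexivity.
      * constructor; exact Hp.
      * apply cost_lt_le, Hlt.
    + apply Hks; simpl; auto.
    + exact (branch_combine_open_r _ _ _ _ _ _ _ Hbc Ho Hinv).
Qed.

Lemma rule_id_sound n ks : rule_id n ks -> sound M n.
Proof.
  intros (_ & (q & Hp & Hnp) & _) w Hn. exfalso.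
  exact (realizes_holds Hn _ Hnp (realizes_holds Hn _ Hp)).
Qed.

Lemma rule_diastar2_sound n ks : rule_diastar2 n ks -> sound M n.
Proof.
  intros (_ & (a & f & _ & [HN|HN] & Hb) & _) w Hn; exfalso.
  - exact (realizes_BD_nil Hn HN _ Hb).
  - destruct (realizes_BD_lt Hn _ HN _ Hb) as [m [Hm Hlt]]. specialize (Hlt _ Hm). lia.
Qed.

(* The child is realized at a world of least cost for [f] among those satisfying its
   formulae; no history entry can then be cheaper than the child's own new entry,
   so every index the child reports lies in the parent's history. *)
Lemma new_dia_child_open n k a f w : realizes M w n -> In (Dia (Aprog a) f) (nG n) ->
  dia_child n k a f -> sound M k ->
  nStat k = Open /\
  forall psi, is_stardia psi = true -> ppre psi f ->
    uev_bounded M (nH n) w (Dia (Aprog a) f) (nUev k f psi) /\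
    forall v, nUev k f psi = Some v -> v <= length (nH n).
Proof.
  intros Hn Hin (HG & HH & HN & HB & _) Hk.
  pose proof (realizes_nnf Hn _ Hin) as Hnnf.
  destruct (dia_atom_least_cost _ _ _ _ (realizes_holds Hn _ Hin)) as (v0 & k0 & Hr & Hc0 & Hlt).
  set (Sat := fun u => forall x, In x (nG k) -> holds M u x).
  assert (Sat_v0 : Sat v0).
  { intros x Hx. apply HG in Hx as [->|Hx]; [eapply dia_cost_holds; eauto|].
    exact (realizes_holds Hn _ Hx v0 Hr). }
  destruct (ex_least_nat (fun m => exists u, Sat u /\ dia_cost M u f m)) as
    (ns & (us & Sat_us & Hcus) & Hleast); [eauto|].
  assert (Hns : ns <= k0) by (apply Hleast; eauto).
  assert (Rk : realizes M us k).
  { apply (realizes_focused M us k f (fun _ => False)).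
    - intros x Hx. split; [|exact (Sat_us x Hx)].
      apply HG in Hx as [->|Hx]; [simpl in Hnnf; tauto|].
      exact (proj2 (realizes_nnf Hn _ Hx)).
    - apply HG; left; reflexivity.
    - exact HN.
    - intros x; rewrite HB; unfold blP; simpl; tauto.
    - contradiction. }
  destruct (Hk us Rk) as [Ho Hinv]. split; [exact Ho|].
  intros psi Hs Hp.
  destruct (Hinv f psi (proj2 (HG f) (or_introl eq_refl)) Hs Hp)
    as [E|(v & j & phi & D & E & Hvj & Hj & Hentry & (u & m & Hu & Hm & Hcheap))];
    [rewrite E; split; [left; reflexivity | discriminate] |].
  specialize (Hcheap _ Hcus).
  rewrite HH in Hentry.
  destruct (Nat.lt_ge_cases (j - 1) (length (nH n))) as [Hold|Hnew].
  - rewrite nth_error_app1 in Hentry by exact Hold. rewrite E. split.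
    + right. exists v, j, phi, D; repeat split; auto.
      exists u, m; repeat split; auto. intros n' Hn'. specialize (Hlt _ Hn'). lia.
    + intros v' [= <-]. lia.
  - exfalso. rewrite nth_error_app2 in Hentry by exact Hnew.
    destruct (j - 1 - length (nH n)) as [|i]; [|destruct i; discriminate].
    injection Hentry as <- <-.
    assert (ns <= m) by (apply Hleast; eauto). lia.
Qed.

Lemma rule_dia_sound n ks : rule_dia n ks -> children_sound ks -> sound M n.
Proof.
  intros (Hshape & _ & ds & _ & Hds & _ & HF & Hst & Hst2 & Hu_new & Hu_old & _) Hks w Hn.
  assert (Hchild : forall d k, In (d, k) (combine ds ks) ->
    In (Dia (Aprog (fst d)) (snd d)) (nG n) /\ ~ old_dia n (fst d) (snd d) /\
    nStat k = Open /\
    forall psi, is_stardia psi = true -> ppre psi (snd d) ->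
      uev_bounded M (nH n) w (Dia (Aprog (fst d)) (snd d)) (nUev k (snd d) psi) /\
      forall v, nUev k (snd d) psi = Some v -> v <= length (nH n)).
  { intros [a f] k Hdk.
    assert (Hnew : In (a, f) ds) by (eapply in_combine_l; eauto).
    apply Hds in Hnew as [Hin Hnold]. do 2 (split; [assumption|]).
    apply (new_dia_child_open n k a f w Hn Hin).
    - exact (Forall2_In_combine _ _ _ _ _ HF Hdk).
    - apply Hks. eapply in_combine_r; eauto. }
  assert (Hopen : nStat n = Open).
  { apply Hst2. intros Hunsat. apply Hst in Hunsat.
    destruct Hunsat as [[k [Hk Hnk]] | (d & k & psi & m & Hdk & Hs & Hp & Hm & Hlen)].
    - destruct (Forall2_In_r_combine _ _ _ _ HF Hk) as [d Hdk].
      apply Hnk, (Hchild d k Hdk).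
    - destruct (Hchild d k Hdk) as (_ & _ & _ & Hbound).
      specialize (proj2 (Hbound psi Hs Hp) m Hm). lia. }
  split; [exact Hopen|].
  intros c psi Hc Hs Hp.
  pose proof (ppre_stardia_is_dia _ _ Hs Hp) as Hdia.
  destruct (Hshape c Hc) as [(a & f & ->)|[(a & f & ->)|[(q & ->)|(q & ->)]]];
    try discriminate.
  assert (Hpf : ppre psi f) by (apply ppre_Dia_inv in Hp; [exact Hp | intros <-; discriminate]).
  assert (Hcond : uev_cond n (Dia (Aprog a) f) psi) by (repeat split; assumption).
  destruct (classic (old_dia n a f)) as [Hold|Hnew].
  - destruct (Hu_old a f Hc Hold) as (j & (Hj & D & HD & HDset) & Hval).
    rewrite (Hval psi Hcond). right. exists j, j, f, D; repeat split; auto.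
    destruct (dia_atom_least_cost _ _ _ _ (realizes_holds Hn _ Hc)) as (v & k & Hr & Hk & Hlt).
    exists v, k; repeat split; auto.
    intros x Hx. apply HDset in Hx as [->|Hx]; [eapply dia_cost_holds; eauto|].
    exact (realizes_holds Hn _ Hx v Hr).
  - assert (Hin : In (a, f) ds) by (apply Hds; auto).
    destruct (Forall2_In_l_combine _ _ _ _ HF Hin) as [k Hdk].
    rewrite (Hu_new (a, f) k psi Hdk Hcond : nUev n (Dia (Aprog a) f) psi = nUev k f psi).
    destruct (Hchild (a, f) k Hdk) as (_ & _ & _ & Hbound).
    exact (proj1 (Hbound psi Hs Hpf)).
Qed.

Lemma rule_step_sound n ks : rule_step n ks -> children_sound ks -> sound M n.
Proof.
  intros Hrule Hks.
  destruct Hrule as [H|[H|[H|[H|[H|[H|[H|[H|[H|[H|[H|[H|H]]]]]]]]]]]].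
  - exact (rule_id_sound n ks H).
  - exact (rule_diastar2_sound n ks H).
  - exact (rule_and_sound n ks H Hks).
  - exact (rule_boxcup_sound n ks H Hks).
  - exact (rule_boxseq_sound n ks H Hks).
  - exact (rule_boxstar_sound n ks H Hks).
  - exact (rule_diaseq_sound n ks H Hks).
  - exact (rule_diatest_sound n ks H Hks).
  - exact (rule_or_sound n ks H Hks).
  - exact (rule_boxtest_sound n ks H Hks).
  - exact (rule_diacup_sound n ks H Hks).
  - exact (rule_diastar1_sound n ks H Hks).
  - exact (rule_dia_sound n ks H Hks).
Qed.

End RuleSoundness.

(** * Applicability of the rules *)

Definition form_eq_dec (x y : form) : {x = y} + {x <> y} := excluded_middle_informative (x = y).

Lemma in_remove_iff x pi l : In x (remove form_eq_dec pi l) <-> In x l /\ x <> pi.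
Proof. split; [apply in_remove | intros [Hx Hne]; apply in_in_remove; assumption]. Qed.

Definition with_result (n : node) (s : status) (u : uevT) : node :=
  mkNode (nG n) (nH n) (nNx n) (nBD n) (nBB n) s u.

Lemma same_content_with_result n s u : same_content n (with_result n s u).
Proof. repeat split. Qed.

Definition open_node G H Nx BD BB : node := mkNode G H Nx BD BB Open uev_bot.

Definition bl_list (rho : form) (B : list form) : list form := if is_nad rho then B else [].

Lemma bl_list_seteq rho B (Bp : form -> Prop) : seteqP B Bp -> seteqP (bl_list rho B) (blP rho Bp).
Proof.
  intros HB x; unfold bl_list, blP. destruct (is_nad rho); simpl.
  - specialize (HB x); intuition.
  - intuition discriminate.
Qed.

Lemma seteqP_In (l : list form) : seteqP l (fun x => In x l).
Proof. intro; tauto. Qed.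

Lemma branch_combine_uev_bot n k1 k2 : nStat n = Open -> (forall c1 c2, nUev n c1 c2 = None) ->
  nStat k1 = Open -> nStat k2 = Open -> branch_combine n k1 k2 uev_bot uev_bot.
Proof.
  intros H1 H2 H3 H4. unfold branch_combine. rewrite H1, H3, H4. repeat split; auto; congruence.
Qed.

Ltac solve_uev_spec := unfold uev_std, uev_rep, uev_star1; intros; repeat split; reflexivity.

Ltac solve_side_set := intro; simpl; rewrite in_remove_iff; unfold inG; intuition congruence.

Ltac solve_child_spec := first [solve_side_set | solve_uev_spec | apply seteqP_In].

Ltac split_ands := repeat match goal with |- _ /\ _ => split end.

Ltac solve_rule_step := unfold rule_step; tauto.

Lemma lin_std_applicable n pi (new bb : form -> Prop) Gk BBk (rule : node -> list node -> Prop) :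
  In pi (nG n) -> nNx n = None -> seteqP Gk (fun x => new x \/ inG n pi x) -> seteqP BBk bb ->
  (forall k, lin_std (with_result n Open uev_bot) k pi new bb ->
     rule (with_result n Open uev_bot) [k]) ->
  (forall m ks, rule m ks -> rule_step m ks) ->
  applicable n.
Proof.
  intros Hin HN HG HB Hrule Hstep.
  exists (with_result n Open uev_bot), [open_node Gk (nH n) None (nBD n) BBk].
  split; [apply same_content_with_result|]. apply Hstep, Hrule.
  unfold lin_std; simpl. rewrite HN.
  repeat split; auto; try apply HG; try apply HB; solve_uev_spec.
Qed.

Lemma lin_dia_applicable n pi rho (new : form -> Prop) Gk (rule : node -> list node -> Prop) :
  In pi (nG n) -> Nx_ok n pi -> seteqP Gk (fun x => new x \/ inG n pi x) ->
  (forall k, lin_dia (with_result n Open uev_bot) k pi rho new ->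
     rule (with_result n Open uev_bot) [k]) ->
  (forall m ks, rule m ks -> rule_step m ks) ->
  applicable n.
Proof.
  intros Hin HN HG Hrule Hstep.
  exists (with_result n Open uev_bot),
    [open_node Gk (nH n) (tst rho) (bl_list rho (nBD n)) (nBB n)].
  split; [apply same_content_with_result|]. apply Hstep, Hrule.
  refine (conj Hin (conj HN (conj HG (conj eq_refl (conj eq_refl
    (conj (bl_list_seteq _ _ _ (seteqP_In _)) (conj (seteqP_In _) (conj eq_refl _)))))))).
  solve_uev_spec.
Qed.

Lemma and_applicable n f g : In (And f g) (nG n) -> nNx n = None -> applicable n.
Proof.
  intros Hin HN.
  apply (lin_std_applicable n (And f g) (fun x => x = f \/ x = g) (fun x => In x (nBB n))
    (f :: g :: remove form_eq_dec (And f g) (nG n)) (nBB n) rule_and); auto.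
  - solve_side_set.
  - apply seteqP_In.
  - intros k H; exists k, f, g; split; auto.
  - intros; solve_rule_step.
Qed.

Lemma boxcup_applicable n a b f : In (Box (Choice a b) f) (nG n) -> nNx n = None -> applicable n.
Proof.
  intros Hin HN.
  apply (lin_std_applicable n (Box (Choice a b) f) (fun x => x = Box a f \/ x = Box b f)
    (fun x => In x (nBB n))
    (Box a f :: Box b f :: remove form_eq_dec (Box (Choice a b) f) (nG n)) (nBB n) rule_boxcup);
    auto.
  - solve_side_set.
  - apply seteqP_In.
  - intros k H; exists k, a, b, f; split; auto.
  - intros; solve_rule_step.
Qed.

Lemma boxseq_applicable n a b f : In (Box (Seq a b) f) (nG n) -> nNx n = None -> applicable n.
Proof.
  intros Hin HN.
  apply (lin_std_applicable n (Box (Seq a b) f) (fun x => x = Box a (Box b f))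
    (fun x => In x (nBB n))
    (Box a (Box b f) :: remove form_eq_dec (Box (Seq a b) f) (nG n)) (nBB n) rule_boxseq); auto.
  - solve_side_set.
  - apply seteqP_In.
  - intros k H; exists k, a, b, f; split; auto.
  - intros; solve_rule_step.
Qed.

Lemma boxstar_applicable n a f : In (Box (Star a) f) (nG n) -> nNx n = None -> applicable n.
Proof.
  intros Hin HN. set (pi := Box (Star a) f).
  set (new := fun x => ~ In pi (nBB n) /\ (x = f \/ x = Box a pi)).
  assert (HBB : seteqP (pi :: nBB n) (fun x => x = pi \/ In x (nBB n)))
    by (intro; simpl; intuition congruence).
  destruct (classic (In pi (nBB n))) as [Hb|Hb].
  - assert (HG : seteqP (remove form_eq_dec pi (nG n)) (fun x => new x \/ inG n pi x))
      by (intro x; rewrite in_remove_iff; unfold new, inG; tauto).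
    apply (lin_std_applicable n pi new _ _ _ rule_boxstar Hin HN HG HBB).
    + intros k H; exists k, a, f; split; auto.
    + intros; solve_rule_step.
  - assert (HG : seteqP (f :: Box a pi :: remove form_eq_dec pi (nG n))
                        (fun x => new x \/ inG n pi x))
      by (unfold new; solve_side_set).
    apply (lin_std_applicable n pi new _ _ _ rule_boxstar Hin HN HG HBB).
    + intros k H; exists k, a, f; split; auto.
    + intros; solve_rule_step.
Qed.

Lemma diaseq_applicable n a b f : In (Dia (Seq a b) f) (nG n) -> Nx_ok n (Dia (Seq a b) f) ->
  applicable n.
Proof.
  intros Hin HN.
  apply (lin_dia_applicable n (Dia (Seq a b) f) (Dia a (Dia b f)) (fun x => x = Dia a (Dia b f))
    (Dia a (Dia b f) :: remove form_eq_dec (Dia (Seq a b) f) (nG n)) rule_diaseq); auto.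
  - solve_side_set.
  - intros k H; exists k, a, b, f; split; auto.
  - intros; solve_rule_step.
Qed.

Lemma diatest_applicable n p f : In (Dia (Test p) f) (nG n) -> Nx_ok n (Dia (Test p) f) ->
  applicable n.
Proof.
  intros Hin HN.
  apply (lin_dia_applicable n (Dia (Test p) f) f (fun x => x = p \/ x = f)
    (p :: f :: remove form_eq_dec (Dia (Test p) f) (nG n)) rule_diatest); auto.
  - solve_side_set.
  - intros k H; exists k, p, f; split; auto.
  - intros; solve_rule_step.
Qed.

Definition std_child (n : node) (pi f : form) : node :=
  open_node (f :: remove form_eq_dec pi (nG n)) (nH n) (nNx n) (nBD n) (nBB n).

Definition dia_child_node (n : node) (pi rho : form) (B : list form) : node :=
  open_node (rho :: remove form_eq_dec pi (nG n)) (nH n) (tst rho) (bl_list rho B) (nBB n).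

Lemma or_applicable n f1 f2 : In (Or f1 f2) (nG n) -> nNx n = None -> applicable n.
Proof.
  intros Hin HN. set (pi := Or f1 f2).
  exists (with_result n Open uev_bot), [std_child n pi f1; std_child n pi f2].
  split; [apply same_content_with_result|]. unfold rule_step; do 8 right; left.
  exists (std_child n pi f1), (std_child n pi f2), f1, f2, uev_bot, uev_bot.
  unfold br_std_child, br_dia_child; split_ands; auto; try solve_child_spec.
  all: apply branch_combine_uev_bot; reflexivity.
Qed.

Lemma boxtest_applicable n p f : In (Box (Test p) f) (nG n) -> nNx n = None -> applicable n.
Proof.
  intros Hin HN. set (pi := Box (Test p) f).
  exists (with_result n Open uev_bot), [std_child n pi (snot p); std_child n pi f].
  split; [apply same_content_with_result|]. unfold rule_step; do 9 right; left.
  exists (std_child n pi (snot p)), (std_child n pi f), p, f, uev_bot, uev_bot.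
  unfold br_std_child, br_dia_child; split_ands; auto; try solve_child_spec.
  all: apply branch_combine_uev_bot; reflexivity.
Qed.

Lemma diacup_applicable n a1 a2 f : In (Dia (Choice a1 a2) f) (nG n) ->
  Nx_ok n (Dia (Choice a1 a2) f) -> applicable n.
Proof.
  intros Hin HN. set (pi := Dia (Choice a1 a2) f).
  set (k1 := dia_child_node n pi (Dia a1 f) (nBD n)).
  set (k2 := dia_child_node n pi (Dia a2 f) (nBD n)).
  exists (with_result n Open uev_bot), [k1; k2].
  split; [apply same_content_with_result|]. unfold rule_step; do 10 right; left.
  exists k1, k2, a1, a2, f, uev_bot, uev_bot. subst k1 k2 pi.
  unfold br_std_child, br_dia_child; split_ands; auto; try solve_child_spec;
    try apply bl_list_seteq, seteqP_In.
  all: apply branch_combine_uev_bot; reflexivity.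
Qed.

Lemma diastar1_applicable n a f : In (Dia (Star a) f) (nG n) -> Nx_ok n (Dia (Star a) f) ->
  ~ In (Dia (Star a) f) (nBD n) -> applicable n.
Proof.
  intros Hin HN Hb. set (pi := Dia (Star a) f).
  set (k1 := dia_child_node n pi f (pi :: nBD n)).
  set (k2 := dia_child_node n pi (Dia a pi) (pi :: nBD n)).
  assert (HBD : seteqP (pi :: nBD n) (fun x => x = pi \/ In x (nBD n)))
    by (intro; simpl; intuition congruence).
  exists (with_result n Open uev_bot), [k1; k2].
  split; [apply same_content_with_result|]. unfold rule_step; do 11 right; left.
  exists k1, k2, a, f, uev_bot, uev_bot. subst k1 k2 pi.
  unfold br_std_child, br_dia_child; split_ands; auto; try solve_child_spec;
    try (apply bl_list_seteq; exact HBD).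
  all: apply branch_combine_uev_bot; reflexivity.
Qed.

Lemma diastar2_applicable n a f : In (Dia (Star a) f) (nG n) -> Nx_ok n (Dia (Star a) f) ->
  In (Dia (Star a) f) (nBD n) -> applicable n.
Proof.
  intros Hin HN Hb. exists (with_result n Barred uev_bot), [].
  split; [apply same_content_with_result|]. unfold rule_step; right; left.
  split; auto. split; eauto.
Qed.

Definition pair_eq_dec (x y : nat * form) : {x = y} + {x <> y} :=
  excluded_middle_informative (x = y).

Definition new_diamonds (n : node) : list (nat * form) :=
  nodup pair_eq_dec (flat_map (fun x => match x with
    | Dia (Aprog a) f => if excluded_middle_informative (old_dia n a f) then [] else [(a, f)]
    | _ => [] end) (nG n)).

Definition box_bodies (a : nat) (G : list form) : list form :=
  flat_map (fun x => match x with
    | Box (Aprog b) g => if Nat.eqb b a then [g] else []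
    | _ => [] end) G.

Definition dia_rule_child (n : node) (d : nat * form) : node :=
  let G := snd d :: box_bodies (fst d) (nG n) in
  open_node G (nH n ++ [(snd d, G)]) (tst (snd d)) [] [].

Definition dia_rule_uev (n : node) : uevT := fun c1 c2 =>
  match c1 with
  | Dia (Aprog a) f =>
      if excluded_middle_informative (In (Dia (Aprog a) f) (nG n) /\ is_stardia c2 = true /\
                                      ppre c2 (Dia (Aprog a) f) /\ old_dia n a f)
      then Some (epsilon (inhabits 0)
                   (fun j => hentry (nH n) j f (fun x => x = f \/ DeltaP n a x)))
      else None
  | _ => None
  end.

Lemma In_box_bodies y a G : In y (box_bodies a G) <-> In (Box (Aprog a) y) G.
Proof.
  unfold box_bodies; rewrite in_flat_map; split.
  - intros [x [Hx Hy]]. destruct x as [| | | | |[b| | | |] g]; simpl in Hy; try tauto.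
    destruct (Nat.eqb_spec b a); simpl in Hy; [|tauto]. destruct Hy as [<-|[]]; subst; auto.
  - intro H; exists (Box (Aprog a) y); split; auto. simpl; rewrite Nat.eqb_refl; left; auto.
Qed.

Lemma In_new_diamonds n a f :
  In (a, f) (new_diamonds n) <-> In (Dia (Aprog a) f) (nG n) /\ ~ old_dia n a f.
Proof.
  unfold new_diamonds; rewrite nodup_In, in_flat_map; split.
  - intros [x [Hx Hy]]. destruct x as [| | | |[b| | | |] g|]; simpl in Hy; try tauto.
    destruct (excluded_middle_informative (old_dia n b g)); simpl in Hy; [tauto|].
    destruct Hy as [E|[]]; injection E as -> ->; auto.
  - intros [H1 H2]; exists (Dia (Aprog a) f); split; auto. simpl.
    destruct (excluded_middle_informative (old_dia n a f)); [tauto|left; auto].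
Qed.

Lemma Forall2_map_r {A B} (P : A -> B -> Prop) (g : A -> B) l :
  (forall x, P x (g x)) -> Forall2 P l (map g l).
Proof. intro H; induction l; simpl; constructor; auto. Qed.

Lemma dia_applicable n :
  (forall x, In x (nG n) ->
     (exists a f, x = Dia (Aprog a) f) \/ (exists a f, x = Box (Aprog a) f) \/
     (exists q, x = Atom q) \/ (exists q, x = Neg (Atom q))) ->
  (forall q, In (Atom q) (nG n) -> ~ In (Neg (Atom q)) (nG n)) ->
  applicable n.
Proof.
  intros Hshape Hconsistent.
  set (hentry_of a f := fun j => hentry (nH n) j f (fun x => x = f \/ DeltaP n a x)).
  exists (with_result n Open (dia_rule_uev n)), (map (dia_rule_child n) (new_diamonds n)).
  split; [apply same_content_with_result|].
  unfold rule_step; do 12 right.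
  split; [exact Hshape|]. split; [exact Hconsistent|].
  exists (new_diamonds n).
  split; [apply NoDup_nodup|].
  split; [exact (In_new_diamonds n)|].
  split; [apply length_map|].
  split.
  { apply Forall2_map_r. intros [a f]. unfold dia_child; simpl.
    repeat split; try reflexivity;
      (intros [->|Hx]; [left; reflexivity | right; apply In_box_bodies; exact Hx]). }
  split.
  { split; [discriminate|].
    intros [[k [Hk Hne]] | (d & k & psi & m & Hdk & _ & _ & Hk & _)].
    - apply in_map_iff in Hk as [d [<- _]]. exfalso; exact (Hne eq_refl).
    - apply in_combine_r, in_map_iff in Hdk as [d' [<- _]]. discriminate Hk. }
  split; [reflexivity|].
  split.
  { intros [a f] k c2 Hdk _.
    destruct (proj1 (In_new_diamonds n a f) (in_combine_l _ _ _ _ Hdk)) as [_ Hnew].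
    apply in_combine_r, in_map_iff in Hdk as [d' [<- _]].
    simpl. unfold dia_rule_uev.
    destruct (excluded_middle_informative _) as [(_ & _ & _ & Hold)|]; [tauto|reflexivity]. }
  split.
  { intros a f Hin Hold. exists (epsilon (inhabits 0) (hentry_of a f)). split.
    - exact (epsilon_spec (inhabits 0) (hentry_of a f) Hold).
    - intros c2 (_ & Hs & Hp). simpl. unfold dia_rule_uev.
      destruct (excluded_middle_informative _) as [_|Hno]; [reflexivity|].
      exfalso; apply Hno; repeat split; auto. }
  intros c1 c2 Hno. simpl. unfold dia_rule_uev.
  destruct c1 as [| | | |[a| | | |] f|]; try reflexivity.
  destruct (excluded_middle_informative _) as [(Hin & Hs & Hp & _)|]; [|reflexivity].
  exfalso; apply Hno. split; [repeat split; auto | eauto].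
Qed.

Definition is_decomposable (x : form) : bool :=
  match x with
  | And _ _ | Or _ _ => true
  | Box (Aprog _) _ | Dia (Aprog _) _ => false
  | Box _ _ | Dia _ _ => true
  | _ => false
  end.

Lemma realizes_applicable M w n : realizes M w n -> applicable n.
Proof.
  intros [Hnnf Hholds HNx HBD_nil _].
  destruct (nNx n) as [x|] eqn:HN.
  - destruct (HNx x eq_refl) as [Hin Hnad].
    assert (Hok : Nx_ok n x) by (right; exact HN).
    destruct x as [| | | |[|p|a b|a b|a] f|]; try discriminate Hnad.
    + exact (diatest_applicable n p f Hin Hok).
    + exact (diaseq_applicable n a b f Hin Hok).
    + exact (diacup_applicable n a b f Hin Hok).
    + destruct (classic (In (Dia (Star a) f) (nBD n))).
      * exact (diastar2_applicable n a f Hin Hok H).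
      * exact (diastar1_applicable n a f Hin Hok H).
  - assert (Hok : forall pi, Nx_ok n pi) by (left; exact HN).
    destruct (classic (exists x, In x (nG n) /\ is_decomposable x = true))
      as [[x [Hin Hdec]]|Hnone].
    + destruct x as [|x|f g|f g|[|p|a b|a b|a] f|[|p|a b|a b|a] f]; try discriminate Hdec.
      * exact (and_applicable n f g Hin HN).
      * exact (or_applicable n f g Hin HN).
      * exact (diatest_applicable n p f Hin (Hok _)).
      * exact (diaseq_applicable n a b f Hin (Hok _)).
      * exact (diacup_applicable n a b f Hin (Hok _)).
      * exact (diastar1_applicable n a f Hin (Hok _) (HBD_nil eq_refl _)).
      * exact (boxtest_applicable n p f Hin HN).
      * exact (boxseq_applicable n a b f Hin HN).
      * exact (boxcup_applicable n a b f Hin HN).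
      * exact (boxstar_applicable n a f Hin HN).
    + apply dia_applicable.
      * intros x Hin.
        assert (Hdec : is_decomposable x = false)
          by (destruct (is_decomposable x) eqn:E; [exfalso; eauto | reflexivity]).
        specialize (Hnnf x Hin).
        destruct x as [q|[q| | | | |]|f g|f g|[a| | | |] f|[a| | | |] f];
          try discriminate Hdec; simpl in Hnnf; try contradiction; eauto 6.
      * intros q Hp Hnp. exact (Hholds _ Hnp (Hholds _ Hp)).
Qed.

(** * Soundness of expanded tableaux *)

Fixpoint tableau_ind' (P : tableau -> Prop) (Hleaf : forall n, P (Leaf n))
  (Hstep : forall n ts, Forall P ts -> P (Step n ts)) (t : tableau) : P t :=
  match t with
  | Leaf n => Hleaf n
  | Step n ts => Hstep n ts ((fix F (l : list tableau) : Forall P l :=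
       match l with
       | nil => Forall_nil _
       | t :: l' => Forall_cons _ (tableau_ind' P Hleaf Hstep t) (F l')
       end) ts)
  end.

Lemma expanded_tableau_sound M t : valid_tableau t -> expanded t -> sound M (troot t).
Proof.
  induction t as [n|n ts IH] using tableau_ind'; intros Hvalid Hexp.
  - inversion Hexp as [? Hnot|]; subst. intros w Hn. exfalso.
    exact (Hnot (realizes_applicable M w n Hn)).
  - inversion Hvalid as [|? ? Hrule Hvalid_ts]; subst.
    inversion Hexp as [|? ? Hexp_ts]; subst.
    apply (rule_step_sound M n (map troot ts) Hrule).
    intros k Hk. apply in_map_iff in Hk as [t [<- Ht]].
    rewrite Forall_forall in IH, Hvalid_ts, Hexp_ts. auto.
Qed.

Theorem theorem4p8 (phi : form) (T : tableau) :
  is_nnf phi ->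
  valid_tableau T ->
  expanded T ->
  nG (troot T) = [phi] ->
  nH (troot T) = [] ->
  nNx (troot T) = None ->
  nBD (troot T) = [] ->
  nBB (troot T) = [] ->
  nStat (troot T) <> Open ->
  ~ satisfiable phi.
Proof.
  intros Hnnf Hvalid Hexp HG _ HN HBD _ Hstat [M [w Hw]].
  apply Hstat, (expanded_tableau_sound M T Hvalid Hexp w).
  apply realizes_unfocused; [| exact HN | rewrite HBD; intros y []].
  rewrite HG. intros x [<-|[]]. split; assumption.
Qed.
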